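(* For every formula (type expression) $A$, the judgment $\vdash(\bullet A\to A)\to A$ is derivable in $\mathbf{LA}\mu$. Consequently the rule ''from $\Gamma\vdash\bullet A\to A$ infer $\Gamma\vdash A$'' is derivable in $\mathbf{LA}\mu$.
   Context: Type expressions: fix a countably infinite set of type variables $X,Y,Z,\dots$. Pseudo type expressions are generated by $A::=X\mid A\to A\mid \bullet A\mid \mu X.A$ ($\mu$ binds $X$; $\alpha$-convertible expressions are identified; $\to$ associates to the right; $\bullet$ binds tighter than $\to$, which binds tighter than $\mu$). $A[B/X]$ denotes capture-avoiding substitution. $\top$ abbreviates $\mu X.\bullet X$. $A$ is proper in $X$ iff: a variable $Y$ is proper in $X$ iff $Y\neq X$; $\bullet A$ is always proper in $X$; $A\to B$ is proper in $X$ iff both $A,B$ are proper in $X$ or $B$ is a $\top$-variant; for $Y\ne X$, $\mu Y.A$ is proper in $X$ iff $A$ is proper in $X$ or $\mu Y.A$ is a $\top$-variant, where $\top$-variants are defined via the tail $t(X)=X$, $t(A\to B)=t(B)$, $t(\bullet A)=\bullet t(A)$, $t(\mu X.A)=\mu X.t(A)$, which has the form $\bullet^{m_0}\mu X_1.\bullet^{m_1}\cdots\mu X_n.\bullet^{m_n}Y$, and $A$ is a $\top$-variant iff $Y=X_i$ for some $i$ with $X_i\notin\{X_{i+1},\dots,X_n\}$ and $m_i+\dots+m_n\ge1$. Type expressions (formulae) are the least set of pseudo type expressions containing all type variables, closed under $\to$ and $\bullet$, and containing $\mu X.A$ whenever it contains $A$ and $A$ is proper in $X$. The formal system $\mathbf{LA}\mu$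 derives judgments $\Gamma\vdash A$ ($\Gamma$ a finite set of formulae, $\bullet\Gamma=\{\bullet B\mid B\in\Gamma\}$) by the rules: (assump) $\Gamma\cup\{A\}\vdash A$; (nec) from $\Gamma_1\vdash A$ infer $\bullet\Gamma_1\cup\Gamma_2\vdash\bullet A$; (4) from $\Gamma\vdash\bullet A$ infer $\Gamma\vdash\bullet\bullet A$; ($\to$I) from $\Gamma\cup\{A\}\vdash B$ infer $\Gamma\vdash A\to B$; ($\to$E) from $\Gamma_1\vdash A\to B$ and $\Gamma_2\vdash A$ infer $\Gamma_1\cup\Gamma_2\vdash B$; (fold) from $\Gamma\vdash A[\mu X.A/X]$ infer $\Gamma\vdash\mu X.A$; (unfold) from $\Gamma\vdash\mu X.A$ infer $\Gamma\vdash A[\mu X.A/X]$; (L) from $\Gamma\vdash\bullet A\to\bullet B$ infer $\Gamma\vdash\bullet(A\to B)$; (approx) from $\Gamma\vdash A$ infer $\Gamma\vdash\bullet A$. $\vdash A$ means $\{\}\vdash A$. *)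

(* Type expressions of LAmu in de Bruijn representation:
   alpha-convertible expressions are identified by construction. *)
From Stdlib Require Import List Arith.
Import ListNotations.

(* Pseudo type expressions: A ::= X | A -> A | bullet A | mu X. A.
   [Var j] is a de Bruijn index: it refers to the (j+1)-th enclosing mu
   binder, or (if j >= number of enclosing binders) to a free type variable. *)
Inductive ty : Type :=
| Var : nat -> ty
| Arr : ty -> ty -> ty
| Bul : ty -> ty
| Mu  : ty -> ty.

Fixpoint lift (c : nat) (A : ty) : ty :=
  match A with
  | Var j => if j <? c then Var j else Var (S j)
  | Arr A1 A2 => Arr (lift c A1) (lift c A2)
  | Bul A1 => Bul (lift c A1)
  | Mu A1 => Mu (lift (S c) A1)
  end.

Fixpoint subst (k : nat) (B : ty) (A : ty) : ty :=
  match A with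
  | Var j => if j =? k then B else if k <? j then Var (pred j) else Var j
  | Arr A1 A2 => Arr (subst k B A1) (subst k B A2)
  | Bul A1 => Bul (subst k B A1)
  | Mu A1 => Mu (subst (S k) (lift 0 B) A1)
  end.

Definition unfold_mu (A : ty) : ty := subst 0 (Mu A) A.

Definition top : ty := Mu (Bul (Var 0)).

Fixpoint tail (A : ty) : ty :=
  match A with
  | Var j => Var j
  | Arr _ B => tail B
  | Bul A1 => Bul (tail A1)
  | Mu A1 => Mu (tail A1)
  end.

(* Reading a tail  bullet^m0 mu X1. bullet^m1 ... mu Xn. bullet^mn Y.
   [ctx] lists the enclosing binders, innermost first; the boolean records
   whether at least one bullet occurs after that binder (m_i+...+m_n >= 1).
   The variable Y is X_i with X_i not rebound later exactly when its
   de Bruijn index points to binder i. *)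
Fixpoint tv_aux (ctx : list bool) (A : ty) : bool :=
  match A with
  | Var j => nth j ctx false
  | Arr _ B => tv_aux ctx B
  | Bul A1 => tv_aux (map (fun _ => true) ctx) A1
  | Mu A1 => tv_aux (false :: ctx) A1
  end.

Definition top_variant (A : ty) : bool := tv_aux [] (tail A).

Fixpoint proper (k : nat) (A : ty) : bool :=
  match A with
  | Var j => negb (j =? k)
  | Bul _ => true
  | Arr A1 A2 => (proper k A1 && proper k A2) || top_variant A2
  | Mu A1 => proper (S k) A1 || top_variant (Mu A1)
  end.

Inductive formula : ty -> Prop :=
| f_var : forall j, formula (Var j)
| f_arr : forall A B, formula A -> formula B -> formula (Arr A B)
| f_bul : forall A, formula A -> formula (Bul A)
| f_mu  : forall A, formula A -> proper 0 A = true -> formula (Mu A).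

(* Finite sets of formulae are represented by lists, up to having the same
   elements; [seteq D S] says D represents the same set as S. *)
Definition seteq (D S : list ty) : Prop := forall x, In x D <-> In x S.

Definition wf_judg (G : list ty) (A : ty) : Prop :=
  Forall formula G /\ formula A.

(* The system LAmu; every rule's conclusion context may be any list
   representing the set-theoretic context of the rule. *)
Inductive derives : list ty -> ty -> Prop :=
| r_assump : forall G A D, seteq D (A :: G) -> wf_judg D A -> derives D A
| r_nec : forall G1 G2 A D, derives G1 A ->
    seteq D (map Bul G1 ++ G2) -> wf_judg D (Bul A) -> derives D (Bul A)
| r_4 : forall G A, derives G (Bul A) -> wf_judg G (Bul (Bul A)) ->
    derives G (Bul (Bul A))
| r_arrI : forall G A B, derives (A :: G) B -> wf_judg G (Arr A B) ->
    derives G (Arr A B)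
| r_arrE : forall G1 G2 A B D, derives G1 (Arr A B) -> derives G2 A ->
    seteq D (G1 ++ G2) -> wf_judg D B -> derives D B
| r_fold : forall G A, derives G (unfold_mu A) -> wf_judg G (Mu A) ->
    derives G (Mu A)
| r_unfold : forall G A, derives G (Mu A) -> wf_judg G (unfold_mu A) ->
    derives G (unfold_mu A)
| r_L : forall G A B, derives G (Arr (Bul A) (Bul B)) ->
    wf_judg G (Bul (Arr A B)) -> derives G (Bul (Arr A B))
| r_approx : forall G A, derives G A -> wf_judg G (Bul A) ->
    derives G (Bul A).

(* Let D := mu X. (bullet X -> A), whose unfolding is bullet D -> A.  From D we
   get A: approximation gives bullet D and unfolding gives bullet D -> A.
   Under F := bullet A -> A, necessitation turns D |- A into F, bullet D |- bullet A,
   hence F, bullet D |- A, i.e. F |- bullet D -> A, which folds to F |- D; and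
   then F |- A as before.  This is the fixed-point argument behind Loeb's rule. *)
From Pilot Require Import Defs.
From Stdlib Require Import List Arith Lia Bool.
Import ListNotations.

Lemma tv_aux_lift A ctx c :
  length ctx <= c -> tv_aux ctx (Defs.tail (lift c A)) = tv_aux ctx (Defs.tail A).
Proof.
  revert ctx c; induction A as [n | A1 _ A2 IHA2 | A IHA | A IHA];
    intros ctx c Hlen; simpl.
  - destruct (Nat.ltb_spec n c); simpl; [reflexivity |].
    rewrite !nth_overflow by lia; reflexivity.
  - now apply IHA2.
  - apply IHA; now rewrite length_map.
  - apply IHA; simpl; lia.
Qed.

Lemma top_variant_lift A c : top_variant (lift c A) = top_variant A.
Proof. apply tv_aux_lift; simpl; lia. Qed.

Lemma proper_lift_lt A k c : k < c -> proper k (lift c A) = proper k A.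
Proof.
  revert k c; induction A as [n | A1 IHA1 A2 IHA2 | A IHA | A IHA];
    intros k c Hkc; simpl.
  - destruct (Nat.ltb_spec n c); [reflexivity |].
    change (negb (S n =? k) = negb (n =? k)).
    destruct (Nat.eqb_spec (S n) k), (Nat.eqb_spec n k); lia || reflexivity.
  - now rewrite IHA1, IHA2, top_variant_lift.
  - reflexivity.
  - rewrite IHA by lia; f_equal; apply (top_variant_lift (Mu A)).
Qed.

Lemma proper_lift_self A c : proper c (lift c A) = true.
Proof.
  revert c; induction A as [n | A1 IHA1 A2 IHA2 | A IHA | A IHA]; intros c; simpl.
  - destruct (Nat.ltb_spec n c);
      [change (negb (n =? c) = true) | change (negb (S n =? c) = true)];
      apply negb_true_iff, Nat.eqb_neq; lia.
  - now rewrite IHA1, IHA2.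
  - reflexivity.
  - now rewrite IHA.
Qed.

Lemma formula_lift A c : formula A -> formula (lift c A).
Proof.
  intros HA; revert c; induction HA; intros c; simpl.
  - destruct (j <? c); constructor.
  - constructor; auto.
  - constructor; auto.
  - constructor; auto; now rewrite proper_lift_lt by lia.
Qed.

Lemma subst_lift A c B : subst c B (lift c A) = A.
Proof.
  revert c B; induction A as [n | A1 IHA1 A2 IHA2 | A IHA | A IHA]; intros c B; simpl.
  - destruct (Nat.ltb_spec n c); cbn [subst].
    + destruct (Nat.eqb_spec n c), (Nat.ltb_spec c n); lia || reflexivity.
    + destruct (Nat.eqb_spec (S n) c), (Nat.ltb_spec c (S n)); lia || reflexivity.
  - now rewrite IHA1, IHA2.
  - now rewrite IHA.
  - now rewrite IHA.
Qed.

Lemma derives_wf G A : derives G A -> wf_judg G A.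
Proof. destruct 1; assumption. Qed.

Lemma Forall_formula_seteq D G :
  seteq D G -> Forall formula G -> Forall formula D.
Proof.
  intros HDG HG; apply Forall_forall; intros x Hx.
  exact (proj1 (Forall_forall _ _) HG x (proj1 (HDG x) Hx)).
Qed.

Lemma derives_assump G A : Forall formula G -> In A G -> derives G A.
Proof.
  intros HG HA; apply r_assump with (G := G).
  - intros x; simpl; intuition congruence.
  - split; [exact HG | exact (proj1 (Forall_forall _ _) HG A HA)].
Qed.

Lemma derives_mp G1 G2 D A B :
  derives G1 (Arr A B) -> derives G2 A -> seteq D (G1 ++ G2) -> derives D B.
Proof.
  intros HAB HA HD.
  destruct (derives_wf _ _ HAB) as [HG1 HfAB], (derives_wf _ _ HA) as [HG2 _].
  inversion HfAB; subst.
  apply (r_arrE G1 G2 A); auto.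
  split; [| assumption].
  apply (Forall_formula_seteq _ _ HD), Forall_app; auto.
Qed.

Lemma seteq_app_diag G : seteq G (G ++ G).
Proof. intros x; rewrite in_app_iff; tauto. Qed.

Lemma derives_mp_same G A B :
  derives G (Arr A B) -> derives G A -> derives G B.
Proof. intros HAB HA; exact (derives_mp G G G A B HAB HA (seteq_app_diag G)). Qed.

Lemma derives_arrI G A B : derives (A :: G) B -> derives G (Arr A B).
Proof.
  intros HB; destruct (derives_wf _ _ HB) as [HAG HfB].
  inversion HAG; subst.
  apply r_arrI; [assumption | split; [| constructor]; assumption].
Qed.

Lemma derives_approx G A : derives G A -> derives G (Bul A).
Proof.
  intros HA; destruct (derives_wf _ _ HA) as [HG HfA].
  apply r_approx; [| split; [| constructor]]; assumption.
Qed.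

Lemma derives_nec G1 G2 A :
  Forall formula G2 -> derives G1 A -> derives (map Bul G1 ++ G2) (Bul A).
Proof.
  intros HG2 HA; destruct (derives_wf _ _ HA) as [HG1 HfA].
  apply (r_nec G1 G2); [assumption | intros x; tauto |].
  split; [| constructor; assumption].
  apply Forall_app; split; [| assumption].
  apply Forall_map; refine (Forall_impl _ _ HG1); intros; now constructor.
Qed.

Definition fix_body (A : ty) : ty := Arr (Bul (Var 0)) (lift 0 A).

Definition fix_ty (A : ty) : ty := Mu (fix_body A).

Lemma formula_fix_ty A : formula A -> formula (fix_ty A).
Proof.
  intros HA; constructor.
  - repeat constructor; now apply formula_lift.
  - simpl; now rewrite proper_lift_self.
Qed.

Lemma unfold_fix_body A : unfold_mu (fix_body A) = Arr (Bul (fix_ty A)) A.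
Proof. unfold unfold_mu, fix_body; simpl; now rewrite subst_lift. Qed.

Lemma derives_fix_ty_fold G A :
  formula A -> derives G (Arr (Bul (fix_ty A)) A) -> derives G (fix_ty A).
Proof.
  intros HA HD; apply r_fold.
  - now rewrite unfold_fix_body.
  - split; [apply (derives_wf _ _ HD) | now apply formula_fix_ty].
Qed.

Lemma derives_fix_ty_elim G A :
  formula A -> derives G (fix_ty A) -> derives G A.
Proof.
  intros HA HD; destruct (derives_wf _ _ HD) as [HG HfD].
  apply derives_mp_same with (Bul (fix_ty A)); [| now apply derives_approx].
  rewrite <- unfold_fix_body; apply r_unfold; [exact HD |].
  rewrite unfold_fix_body; split; [exact HG | constructor; [constructor |]; assumption].
Qed.

Lemma derives_loeb A : formula A -> derives [] (Arr (Arr (Bul A) A) A).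
Proof.
  intros HA.
  set (D := fix_ty A); set (F := Arr (Bul A) A).
  assert (HfD : formula D) by now apply formula_fix_ty.
  assert (HfF : formula F) by now repeat constructor.
  assert (HDA : derives [D] A).
  { apply derives_fix_ty_elim; [exact HA |].
    apply derives_assump; [exact (Forall_cons _ HfD (Forall_nil _)) | now left]. }
  assert (HbA : derives [Bul D; F] (Bul A)).
  { exact (derives_nec [D] [F] A (Forall_cons _ HfF (Forall_nil _)) HDA). }
  assert (HFA : derives [Bul D; F] A).
  { apply derives_mp_same with (Bul A); [| exact HbA].
    apply derives_assump; [| now right; left].
    destruct (derives_wf _ _ HbA) as [HG _]; exact HG. }
  assert (HFD : derives [F] D) by (apply derives_fix_ty_fold; [exact HA |];
                                   now apply derives_arrI).
  now apply derives_arrI, derives_fix_ty_elim.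
Qed.

Theorem proposition10 :
  (forall A : ty, formula A -> derives [] (Arr (Arr (Bul A) A) A)) /\
  (forall (G : list ty) (A : ty), Forall formula G -> formula A ->
     derives G (Arr (Bul A) A) -> derives G A).
Proof.
  split; [exact derives_loeb |].
  intros G A _ HA HG.
  exact (derives_mp [] G G _ A (derives_loeb A HA) HG (fun x => iff_refl _)).
Qed.
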